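(* Let $E$ be a real Hilbert space with $\dim(E)\ge 2$, let $h\in E$ be a unit vector, and let $f:\mathbb{R}_{\ge0}\to\mathbb{R}_{\ge0}$ satisfy $f(d)>0$ if and only if $d>0$. Define $C_f=\{x\in E\mid f(\|x_\perp\|)\le x_h\}$ and the relation $x\preceq_f y \iff y-x\in C_f$ on $E$. (a) If $\dim(E)\ge 3$, then $(E,\preceq_f)$ is a cc sponge if and only if the relation $\preceq_f$ is topologically closed (as a subset of $E\times E$) and $f$ is square-superadditive. (b) If $\dim(E)=2$ and the relation $\preceq_f$ is topologically closed, then $(E,\preceq_f)$ is a cc sponge if and only if $f$ is superadditive.
   Context: For $x\in E$ write $x=x_h h+x_\perp$ with $x_h=(x,h)\in\mathbb{R}$ and $x_\perp$ orthogonal to $h$. An orientation on a set $S$ is a reflexive, antisymmetric binary relation $\preceq$. For $P,Q\subseteq S$, $P\preceq Q$ means $p\preceq q$ for all $p\in P,q\in Q$. $P$ is right-bounded if $P\preceq\{s\}$ for some $s\in S$. An element $x$ is the join of $P$ if $P\preceq\{x\}$ and for all $y\in S$ with $P\preceq\{y\}$ we have $x\preceq y$. An oriented set $(S,\preceq)$ is a conditionally complete sponge (cc sponge) if every nonempty right-bounded subset of $S$ has a join. A function $f:\mathbb{R}_{\ge0}\to\mathbb{R}_{\ge0}$ is superadditive if $f(x+y)\ge f(x)+f(y)$ for all $x,y\ge0$, and square-superadditive if $f(\sqrt{x^2+y^2})\ge f(x)+f(y)$ for all $x,y\ge 0$. *)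

From HB Require Import structures.
From mathcomp Require Import all_boot all_order all_algebra.
From mathcomp Require Import all_classical all_reals all_analysis.
Set Implicit Arguments. Unset Strict Implicit. Unset Printing Implicit Defensive.
Import Order.TTheory GRing.Theory Num.Theory.
Import numFieldNormedType.Exports.
Local Open Scope classical_set_scope.
Local Open Scope ring_scope.

(* ip is a real inner product on E inducing the norm of E
   (together with completeness of E this makes E a real Hilbert space). *)
Definition is_inner_product {R : realType} (E : normedModType R)
    (ip : E -> E -> R) : Prop :=
  (forall x y, ip x y = ip y x) /\
  (forall a x y z, ip (a *: x + y) z = a * ip x z + ip y z) /\
  (forall x, ip x x = `|x| ^+ 2).

Definition dim_ge {R : realType} (E : normedModType R) (n : nat) : Prop :=
  exists v : 'I_n -> E, forall c : 'I_n -> R,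
    \sum_(i < n) c i *: v i = 0 -> forall i, c i = 0.

Definition dim_eq {R : realType} (E : normedModType R) (n : nat) : Prop :=
  dim_ge E n /\ ~ dim_ge E n.+1.

Definition orientation {S : Type} (le : S -> S -> Prop) : Prop :=
  (forall x, le x x) /\ (forall x y, le x y -> le y x -> x = y).

Definition set_le {S : Type} (le : S -> S -> Prop) (P Q : set S) : Prop :=
  forall p q, P p -> Q q -> le p q.

Definition right_bounded {S : Type} (le : S -> S -> Prop) (P : set S) : Prop :=
  exists s, set_le le P [set s].

Definition is_join {S : Type} (le : S -> S -> Prop) (P : set S) (x : S) : Prop :=
  set_le le P [set x] /\ forall y, set_le le P [set y] -> le x y.

Definition cc_sponge {S : Type} (le : S -> S -> Prop) : Prop :=
  orientation le /\
  forall P : set S, P !=set0 -> right_bounded le P -> exists x, is_join le P x.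

(* functions R_{>=0} -> R_{>=0}, represented by f : R -> R (values on
   negative arguments are irrelevant) *)
Definition superadditive {R : realType} (f : R -> R) : Prop :=
  forall x y, 0 <= x -> 0 <= y -> f x + f y <= f (x + y).

Definition square_superadditive {R : realType} (f : R -> R) : Prop :=
  forall x y, 0 <= x -> 0 <= y -> f x + f y <= f (Num.sqrt (x ^+ 2 + y ^+ 2)).

Definition comp_h {R : realType} {E : normedModType R} (ip : E -> E -> R)
  (h x : E) : R := ip x h.
Definition comp_perp {R : realType} {E : normedModType R} (ip : E -> E -> R)
  (h x : E) : E := x - comp_h ip h x *: h.

Definition C_f {R : realType} {E : normedModType R} (ip : E -> E -> R)
  (h : E) (f : R -> R) : set E :=
  [set x | f `|comp_perp ip h x| <= comp_h ip h x].

Definition prec_f {R : realType} {E : normedModType R} (ip : E -> E -> R)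
  (h : E) (f : R -> R) (x y : E) : Prop := C_f ip h f (y - x).

Definition closed_rel {R : realType} {E : normedModType R}
  (le : E -> E -> Prop) : Prop :=
  closed [set p : E * E | le p.1 p.2].

(* The reflection x |-> 2 x_h h - x preserves the order, so the
   join of a reflection-symmetric set lies on the axis R h.  For a horizontal unit vector e,
   comparing the join of {x e, -x e} with the upper bounds T h + v (v horizontal) gives
   f x + f |v| <= T as soon as f |v - x e| <= T and f |v + x e| <= T.  With v orthogonal to e
   this is square-superadditivity; in dimension 2 it only yields f x + f y <= f (x + y) or
   f x + f y <= f |x - y|, which, by an induction on multiples of a small step and the lower
   semicontinuity forced by closedness, gives superadditivity.  In dimension >= 3,
   square-superadditivity makes f small near 0, hence f is lower semicontinuous from the left
   and the order is closed.
   Conversely, (square-)superadditivity makes f |.| superadditive on pairs of horizontal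
   vectors with nonnegative inner product.  For a right-bounded P, two upper bounds of height
   close to the infimum m of the heights of all upper bounds are then close to each other:
   otherwise a point of the segment between them, lowered below height m, would still be an
   upper bound.  Upper bounds with heights tending to m form a Cauchy sequence, and its limit
   is the join. *)

From HB Require Import structures.
From mathcomp Require Import all_boot all_order all_algebra.
From mathcomp Require Import all_classical all_reals all_analysis.
From mathcomp Require Import ring lra zify.
Import Order.TTheory GRing.Theory Num.Theory.
Import numFieldNormedType.Exports.
Local Open Scope classical_set_scope.
Local Open Scope ring_scope.
Set Implicit Arguments. Unset Strict Implicit.

Lemma exists_natinv_lt (R : realType) (t : R) : 0 < t -> exists n : nat, n.+1%:R^-1 < t.
Proof.
move=> t0; exists (Num.truncn t^-1).
by rewrite -[t in _ < t]invrK ltf_pV2 ?posrE ?invr_gt0 // truncnS_gt.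
Qed.

Lemma join_fixed (S : Type) (le : S -> S -> Prop) (s : S -> S) (P : set S) c :
  (forall x y, le x y -> le y x -> x = y) -> involutive s ->
  (forall x y, le x y -> le (s x) (s y)) -> (forall p, P p -> P (s p)) ->
  is_join le P c -> s c = c.
Proof.
move=> anti sK s_le sP [c_ub c_least].
have s_ub y : set_le le P [set y] -> set_le le P [set s y].
  move=> y_ub p _ Pp ->; rewrite -[p]sK; exact/s_le/(y_ub _ y (sP _ Pp)).
apply: anti; last exact: c_least (s_ub _ c_ub).
by rewrite -[c in le _ c]sK; apply/s_le/c_least/s_ub.
Qed.

Lemma closed_relP (R : realType) (E : normedModType R) (le : E -> E -> Prop) :
  closed_rel le <-> forall x y, ~ le x y -> exists2 r, 0 < r &
    forall x' y', `|x' - x| < r -> `|y' - y| < r -> ~ le x' y'.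
Proof.
split=> [/closed_openC + x y nle|sep [x y] /= cl].
  rewrite openE => /(_ (x, y) nle) /nbhs_ballP [r r0 ball_r].
  exists r => // x' y' x'x y'y; apply: (ball_r (x', y')).
  by split; rewrite /= -ball_normE /ball_ /= distrC.
apply: contrapT => nle; have [r r0 sep_r] := sep x y nle.
have [[x' y'] [/= le' [/= x'x y'y]]] := cl _ (nbhsx_ballx (x, y) r r0).
by apply: (sep_r x' y') le'; [move: x'x | move: y'y]; rewrite -ball_normE /ball_ /= distrC.
Qed.

Section RealFunctions.
Variables (R : realType) (f : R -> R).
Hypothesis f_ge0 : forall d, 0 <= d -> 0 <= f d.
Hypothesis f_gt0 : forall d, 0 <= d -> (0 < f d <-> 0 < d).

Lemma f_at0 : f 0 = 0.
Proof.
apply/eqP; rewrite eq_le f_ge0 // andbT leNgt; apply/negP => /f_gt0.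
by rewrite ltxx => /(_ (lexx 0)).
Qed.

Lemma f_le0_eq0 d : 0 <= d -> f d <= 0 -> d = 0.
Proof.
move=> d0 fd0; apply/eqP; rewrite eq_le d0 andbT leNgt; apply/negP => /(f_gt0 d0).
by rewrite ltNge fd0.
Qed.

Lemma superadditive_mono : superadditive f ->
  forall a b, 0 <= a -> a <= b -> f a <= f b.
Proof.
move=> sa a b a0 ab; have ba0 : 0 <= b - a by rewrite subr_ge0.
by have := sa _ _ a0 ba0; rewrite [a + _]addrC subrK; have := f_ge0 ba0; lra.
Qed.

Lemma square_superadditive_mono : square_superadditive f ->
  forall a b, 0 <= a -> a <= b -> f a <= f b.
Proof.
move=> ssa a b a0 ab; have b0 : 0 <= b := le_trans a0 ab.
have c0 : 0 <= b ^+ 2 - a ^+ 2 by rewrite subr_ge0 ler_pXn2r.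
have := ssa a _ a0 (sqrtr_ge0 (b ^+ 2 - a ^+ 2)).
rewrite sqr_sqrtr // [a ^+ 2 + _]addrC subrK sqrtr_sqr ger0_norm //.
by have := f_ge0 (sqrtr_ge0 (b ^+ 2 - a ^+ 2)); lra.
Qed.

(* Iterate [2 f (t / sqrt 2) <= f t], an instance of square-superadditivity. *)
Lemma square_superadditive_small : square_superadditive f ->
  forall D eps, 0 < D -> 0 < eps -> exists t, [/\ 0 < t, t <= D & f t <= eps].
Proof.
move=> ssa D eps D0 eps0.
have s1 : 1 <= Num.sqrt 2 :> R by rewrite -{1}sqrtr1 ler_sqrt ?ler0n // ler1n.
have s0 : Num.sqrt 2 != 0 :> R by rewrite gt_eqF // (lt_le_trans ltr01).
pose u k := D / Num.sqrt 2 ^+ k.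
have u0 k : 0 < u k by rewrite divr_gt0 ?exprn_gt0 // (lt_le_trans ltr01).
have halve k : 2 * f (u k.+1) <= f (u k).
  have -> : u k = Num.sqrt (u k.+1 ^+ 2 + u k.+1 ^+ 2).
    rewrite -mulr2n -mulr_natl sqrtrM ?ler0n // sqrtr_sqr gtr0_norm //.
    by rewrite /u exprSr; field; rewrite s0 expf_neq0.
  by apply: le_trans (ssa _ _ (ltW (u0 k.+1)) (ltW (u0 k.+1))); lra.
have iter k : 2 ^+ k * f (u k) <= f D.
  elim: k => [|k IH]; first by rewrite /u !expr0 invr1 mulr1 mul1r.
  by apply: le_trans IH; rewrite exprSr -mulrA ler_pM2l ?exprn_gt0.
pose k := Num.truncn (f D / eps).
have kD : f D < k.+1%:R * eps by rewrite -ltr_pdivrMr // truncnS_gt.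
have k2 : k.+1%:R <= 2 ^+ k :> R by rewrite -natrX ler_nat ltn_expl.
exists (u k); split => //.
  rewrite /u ler_pdivrMr ?exprn_gt0 ?(lt_le_trans ltr01) //.
  exact: ler_peMr (ltW D0) (exprn_ege1 _ s1).
have : 2 ^+ k * f (u k) < 2 ^+ k * eps.
  by apply: le_lt_trans (iter k) (lt_le_trans kD _); rewrite ler_pM2r.
by rewrite ltr_pM2l ?exprn_gt0 // => /ltW.
Qed.

Section SuperadditiveOfLsc.
Hypothesis sum_or_diff : forall x y, 0 <= x -> 0 <= y ->
  f x + f y <= f (x + y) \/ f x + f y <= f `|x - y|.
Hypothesis f_lsc : forall d eps, 0 <= d -> 0 < eps -> exists2 r, 0 < r &
  forall d', 0 <= d' -> `|d' - d| < r -> f d - eps < f d'.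

(* In the second alternative of [sum_or_diff], with [n <= m], the induction hypothesis for
   [(n, m - n)] forces [f (n g) <= 0]. *)
Lemma superadditive_multiples g : 0 < g -> forall n m : nat,
  f (n%:R * g) + f (m%:R * g) <= f ((n + m)%:R * g).
Proof.
move=> g0 n m; have [k nmk] := ubnP (n + m); elim: k => // k IH in n m nmk *.
wlog nm : n m nmk / (n <= m)%N => [sym|].
  case: (leqP n m) => [|/ltnW mn]; first exact: sym.
  by rewrite addrC addnC; apply: sym; rewrite // addnC.
have ng0 (i : nat) : 0 <= i%:R * g by rewrite mulr_ge0 // ltW.
have [->|n0] := posnP n; first by rewrite mul0r f_at0 add0r add0n.
rewrite natrD mulrDl; have [//|diff] := sum_or_diff (ng0 n) (ng0 m).
have dist : `|n%:R * g - m%:R * g| = (m - n)%:R * g.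
  by rewrite -mulrBl normrM (gtr0_norm g0) distrC -natrB // normr_nat.
rewrite dist in diff.
have := IH n (m - n)%N; rewrite subnKC // => /(_ ltac:(lia)).
have : 0 < f (n%:R * g) by apply/f_gt0 => //; rewrite mulr_gt0 ?ltr0n.
lra.
Qed.

Lemma superadditive_of_lsc : superadditive f.
Proof.
move=> x y x0 y0; apply/ler_addgt0Pr => e e0.
have e2 : 0 < e / 2 by rewrite divr_gt0.
have [r1 r1_0 near_x] := f_lsc x0 e2.
have [r2 r2_0 near_y] := f_lsc y0 e2.
have [xy0|xy0] := leP (x + y) 0.
  have -> : x = 0 by lra.
  have -> : y = 0 by lra.
  by rewrite addr0 f_at0; lra.
pose r := Num.min r1 r2.
have r0 : 0 < r by rewrite lt_min r1_0 r2_0.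
have [N invN] := exists_natinv_lt (divr_gt0 r0 xy0).
pose g := (x + y) / N.+1%:R.
have g0 : 0 < g by rewrite divr_gt0.
have g_lt_r : g < r.
  by rewrite /g -(ltr_pM2l xy0) in invN; rewrite mulrCA mulfV ?mulr1 ?gt_eqF in invN.
have xyN : x + y = N.+1%:R * g by rewrite /g mulrC mulfVK ?pnatr_eq0.
clearbody g; clear invN.
have /andP [p_le p_lt] := truncn_itv (divr_ge0 x0 (ltW g0)).
move: (Num.truncn (x / g)) p_le p_lt => p p_le p_lt.
have pg_le_x : p%:R * g <= x by rewrite -ler_pdivlMr.
have x_lt_pg : x < p%:R * g + g by move: p_lt; rewrite ltr_pdivrMr // -natr1 mulrDl mul1r.
clear p_le p_lt.
have pN : (p <= N.+1)%N by rewrite -(ler_nat R) -(ler_pM2r g0) -xyN; lra.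
have := superadditive_multiples g0 p (N.+1 - p); rewrite subnKC // -xyN natrB // mulrBl -xyN.
have [r_r1 r_r2] : r <= r1 /\ r <= r2 by split; rewrite ge_min lexx ?orbT.
have px : `|p%:R * g - x| < r1 by rewrite ler0_norm ?subr_le0 //; lra.
have py : `|x + y - p%:R * g - y| < r2 by rewrite ger0_norm; lra.
have := near_x _ (mulr_ge0 (ler0n _ _) (ltW g0)) px.
have py0 : 0 <= x + y - p%:R * g by lra.
have := near_y _ py0 py.
lra.
Qed.
End SuperadditiveOfLsc.
End RealFunctions.

Section InnerProductSpace.
Variables (R : realType) (E : normedModType R) (ip : E -> E -> R).
Hypothesis ipP : is_inner_product ip.

Lemma ipC x y : ip x y = ip y x. Proof. by case: ipP. Qed.

Lemma ipxx x : ip x x = `|x| ^+ 2. Proof. by case: ipP => _ []. Qed.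

Lemma ipDZ a x y z : ip (a *: x + y) z = a * ip x z + ip y z.
Proof. by case: ipP => _ []. Qed.

Lemma ip0 z : ip 0 z = 0.
Proof. by have := ipDZ 1 0 0 z; rewrite scaler0 addr0 mul1r; lra. Qed.

Lemma ipD x y z : ip (x + y) z = ip x z + ip y z.
Proof. by have := ipDZ 1 x y z; rewrite scale1r mul1r. Qed.

Lemma ipZ a x z : ip (a *: x) z = a * ip x z.
Proof. by rewrite -[a *: x]addr0 ipDZ ip0 addr0. Qed.

Lemma ipN x z : ip (- x) z = - ip x z. Proof. by rewrite -scaleN1r ipZ mulN1r. Qed.
Lemma ipB x y z : ip (x - y) z = ip x z - ip y z. Proof. by rewrite ipD ipN. Qed.
Lemma ipDr x y z : ip z (x + y) = ip z x + ip z y. Proof. by rewrite !(ipC z) ipD. Qed.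
Lemma ipZr a x z : ip z (a *: x) = a * ip z x. Proof. by rewrite !(ipC z) ipZ. Qed.

Lemma ip_suml I (r : seq I) (P : pred I) (F : I -> E) z :
  ip (\sum_(i <- r | P i) F i) z = \sum_(i <- r | P i) ip (F i) z.
Proof. by apply: (big_morph (ip^~ z)) => [x y|]; rewrite ?ipD ?ip0. Qed.

Lemma normD_sqr x y : `|x + y| ^+ 2 = `|x| ^+ 2 + `|y| ^+ 2 + 2 * ip x y.
Proof. by rewrite -!ipxx ipD !ipDr (ipC y x); ring. Qed.

Definition independent n (v : 'I_n -> E) :=
  forall c : 'I_n -> R, \sum_i c i *: v i = 0 -> forall i, c i = 0.

(* A nonzero row of [kermx] of the coefficient matrix yields a nontrivial relation. *)
Lemma independent_span_leq n k (v : 'I_n -> E) (u : 'I_k -> E) (a : 'I_n -> 'I_k -> R) :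
  independent v -> (forall i, v i = \sum_j a i j *: u j) -> (n <= k)%N.
Proof.
move=> indep vE; rewrite leqNgt; apply/negP => kn.
pose A := \matrix_(i, j) a i j.
have : kermx A != 0.
  by rewrite kermx_eq0 /row_free neq_ltn (leq_ltn_trans (rank_leq_col A) kn).
case/matrix0Pn => i0 [i /eqP]; apply; apply: (indep (kermx A i0)) => //.
under eq_bigr do rewrite vE scaler_sumr.
rewrite exchange_big big1 // => j _.
have KA : \sum_i kermx A i0 i * a i j = 0.
  have := congr1 (fun M : 'M[R]_(n, k) => M i0 j) (mulmx_ker A); rewrite !mxE.
  by move=> KA; apply: (etrans _ KA); apply: eq_bigr => l _; rewrite [A _ _]mxE.
by under eq_bigr do rewrite scalerA; rewrite -scaler_suml KA scale0r.
Qed.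

Definition orthonormal n (u : 'I_n -> E) := forall i j, ip (u i) (u j) = (i == j)%:R.

Lemma orthonormal_independent n (u : 'I_n -> E) : orthonormal u -> independent u.
Proof.
move=> on c sum0 i; have := congr1 (ip^~ (u i)) sum0; rewrite ip0 ip_suml.
rewrite (bigD1 i) //= big1 => [|j ji]; last by rewrite ipZ on (negbTE ji) mulr0.
by rewrite ipZ on eqxx mulr1 addr0.
Qed.

Definition orthoproj n (u : 'I_n -> E) x := \sum_j ip x (u j) *: u j.

Lemma ip_orthoproj_sub n (u : 'I_n -> E) x k :
  orthonormal u -> ip (x - orthoproj u x) (u k) = 0.
Proof.
move=> on; rewrite ipB ip_suml (bigD1 k) //= big1 => [|j jk].
  by rewrite ipZ on eqxx mulr1 addr0 subrr.
by rewrite ipZ on (negbTE jk) mulr0.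
Qed.

Definition extend n (u : 'I_n -> E) (x : E) (i : 'I_n.+1) : E :=
  if unlift ord_max i is Some j then u j else x.

Lemma extend_max n (u : 'I_n -> E) x : extend u x ord_max = x.
Proof. by rewrite /extend unlift_none. Qed.

Lemma extend_lift n (u : 'I_n -> E) x j : extend u x (lift ord_max j) = u j.
Proof. by rewrite /extend liftK. Qed.

Lemma orthoproj_extend n (u : 'I_n -> E) x y :
  orthoproj (extend u x) y = orthoproj u y + ip y x *: x.
Proof.
rewrite /orthoproj big_ord_recr /= extend_max; congr (_ + _).
apply: eq_bigr => j _.
have -> : widen_ord (leqnSn n) j = lift ord_max j by apply: ord_inj; rewrite lift_max.
by rewrite extend_lift.
Qed.

Lemma orthonormal_extend n (u : 'I_n -> E) r : orthonormal u -> r != 0 ->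
  (forall j, ip r (u j) = 0) -> orthonormal (extend u (`|r|^-1 *: r)).
Proof.
move=> on r0 ru i j; rewrite /extend.
have rn : ip (`|r|^-1 *: r) (`|r|^-1 *: r) = 1.
  by rewrite ipxx normrZ normfV normr_id mulVf ?normr_eq0 ?expr1n.
case: unliftP => [i' ->|->]; case: unliftP => [j' ->|->].
- by rewrite on (inj_eq lift_inj).
- by rewrite ipC ipZ ru mulr0 eq_sym (negbTE (neq_lift _ _)).
- by rewrite ipZ ru mulr0 (negbTE (neq_lift _ _)).
- by rewrite rn eqxx.
Qed.

Lemma exists_orthonormal_extend n (u : 'I_n -> E) :
  orthonormal u -> dim_ge E n.+1 -> exists e, orthonormal (extend u e).
Proof.
move=> on [v indep].
have [i ri] : exists i, v i - orthoproj u (v i) != 0.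
  apply: contrapT => /forallNP vE.
  suff : (n.+1 <= n)%N by rewrite ltnn.
  apply: (independent_span_leq indep (a := fun i j => ip (v i) (u j))) => i.
  by apply/eqP; rewrite -subr_eq0; apply/negPn/negP/vE.
by eexists; apply: (orthonormal_extend on ri) => j; apply: ip_orthoproj_sub.
Qed.

Lemma orthoproj_id n (u : 'I_n -> E) x :
  orthonormal u -> ~ dim_ge E n.+1 -> orthoproj u x = x.
Proof.
move=> on ndim; apply/eqP; rewrite eq_sym -subr_eq0; apply/negPn/negP => r0.
apply: ndim; eexists; apply: orthonormal_independent.
by apply: (orthonormal_extend on r0) => j; apply: ip_orthoproj_sub.
Qed.

Lemma orthonormal_extendP n (u : 'I_n -> E) x : orthonormal (extend u x) ->
  [/\ orthonormal u, `|x| = 1 & forall j, ip x (u j) = 0].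
Proof.
move=> on; split=> [i j||j].
- by have := on (lift ord_max i) (lift ord_max j); rewrite !extend_lift (inj_eq lift_inj).
- apply/eqP; rewrite -(@eqrXn2 _ 2) // expr1n -ipxx.
  by have := on ord_max ord_max; rewrite extend_max eqxx => ->.
- have := on ord_max (lift ord_max j); rewrite extend_max extend_lift => ->.
  by rewrite (negbTE (neq_lift _ _)).
Qed.

Lemma orthonormal_unit h : `|h| = 1 -> orthonormal (fun _ : 'I_1 => h).
Proof. by move=> h1 i j; rewrite !ord1 eqxx ipxx h1 expr1n. Qed.

Lemma collinear_of_dim_lt3 h e : orthonormal (extend (fun _ : 'I_1 => h) e) ->
  ~ dim_ge E 3 -> forall x, ip x h = 0 -> x = ip x e *: e.
Proof.
move=> on ndim x xh.
by rewrite -{1}(orthoproj_id x on ndim) orthoproj_extend /orthoproj big_ord1 xh scale0r add0r.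
Qed.

Section Cone.
Variables (h : E) (f : R -> R).
Hypothesis h1 : `|h| = 1.
Hypothesis f_ge0 : forall d, 0 <= d -> 0 <= f d.
Hypothesis f_gt0 : forall d, 0 <= d -> (0 < f d <-> 0 < d).

Local Notation hc := (comp_h ip h).
Local Notation pp := (comp_perp ip h).
Local Notation prec := (prec_f ip h f).

Lemma comp_hD x y : hc (x + y) = hc x + hc y. Proof. exact: ipD. Qed.
Lemma comp_hZ a x : hc (a *: x) = a * hc x. Proof. exact: ipZ. Qed.
Lemma comp_hB x y : hc (x - y) = hc x - hc y. Proof. exact: ipB. Qed.
Lemma comp_hZh a : hc (a *: h) = a.
Proof. by rewrite comp_hZ /comp_h ipxx h1 expr1n mulr1. Qed.

Lemma comp_perpDh x : pp x + hc x *: h = x. Proof. exact: subrK. Qed.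
Lemma comp_perpD x y : pp (x + y) = pp x + pp y.
Proof. by rewrite /comp_perp comp_hD scalerDl opprD addrACA. Qed.
Lemma comp_perpZ a x : pp (a *: x) = a *: pp x.
Proof. by rewrite /comp_perp comp_hZ scalerBr scalerA. Qed.
Lemma comp_perpB x y : pp (x - y) = pp x - pp y.
Proof. by rewrite comp_perpD -scaleN1r comp_perpZ scaleN1r. Qed.
Lemma comp_perpZh a : pp (a *: h) = 0. Proof. by rewrite /comp_perp comp_hZh subrr. Qed.
Lemma comp_perp_id v : hc v = 0 -> pp v = v.
Proof. by rewrite /comp_perp => ->; rewrite scale0r subr0. Qed.
Lemma comp_h_perp x : hc (pp x) = 0. Proof. by rewrite comp_hB comp_hZh subrr. Qed.

Lemma comp_perp_axis a v : hc v = 0 -> pp (a *: h + v) = v.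
Proof. by move=> hv; rewrite comp_perpD comp_perpZh add0r comp_perp_id. Qed.
Lemma comp_h_axis a v : hc v = 0 -> hc (a *: h + v) = a.
Proof. by move=> hv; rewrite comp_hD comp_hZh hv addr0. Qed.

Lemma comp_h0 : hc 0 = 0. Proof. exact: ip0. Qed.
Lemma comp_perp0 : pp 0 = 0. Proof. exact: comp_perp_id comp_h0. Qed.

Lemma norm_sqr_decomp x : `|x| ^+ 2 = `|pp x| ^+ 2 + hc x ^+ 2.
Proof.
rewrite -{1}(comp_perpDh x) normD_sqr ipZr (comp_h_perp x : ip _ h = 0) !mulr0 addr0.
by rewrite normrZ h1 mulr1 real_normK ?num_real.
Qed.

Lemma norm_comp_perp_le x : `|pp x| <= `|x|.
Proof. by rewrite -ler_sqr ?nnegrE // (norm_sqr_decomp x) lerDl sqr_ge0. Qed.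

Lemma norm_comp_h_le x : `|hc x| <= `|x|.
Proof.
by rewrite -ler_sqr ?nnegrE // (norm_sqr_decomp x) real_normK ?num_real // lerDr sqr_ge0.
Qed.

Lemma norm_le_comp x : `|x| <= `|pp x| + `|hc x|.
Proof.
rewrite -{1}(comp_perpDh x); apply: le_trans (ler_normD _ _) _.
by rewrite normrZ h1 mulr1.
Qed.

Lemma precE x y : prec x y <-> f `|pp y - pp x| <= hc y - hc x.
Proof. by rewrite /prec_f /C_f /= comp_perpB comp_hB. Qed.

Lemma prec_orientation : orientation prec.
Proof.
split=> [x|x y /precE xy /precE yx].
  by apply/precE; rewrite !subrr normr0 (f_at0 f_ge0 f_gt0).
have fxy := f_ge0 (normr_ge0 (pp y - pp x)); have fyx := f_ge0 (normr_ge0 (pp x - pp y)).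
have hxy : hc y = hc x by lra.
have /normr0_eq0/eqP : `|pp y - pp x| = 0 by apply: (f_le0_eq0 f_gt0) => //; lra.
by rewrite subr_eq0 => /eqP pxy; rewrite -(comp_perpDh x) -(comp_perpDh y) pxy hxy.
Qed.

Definition axis_reflection x := (2 * hc x) *: h - x.
Local Notation refl := axis_reflection.

Lemma comp_perp_reflection x : pp (refl x) = - pp x.
Proof. by rewrite comp_perpB comp_perpZh sub0r. Qed.
Lemma comp_h_reflection x : hc (refl x) = hc x.
Proof. by rewrite comp_hB comp_hZh; ring. Qed.
Lemma axis_reflectionK : involutive refl.
Proof. by move=> x; rewrite {1}/axis_reflection comp_h_reflection opprB addrC subrK. Qed.

Lemma prec_reflection x y : prec x y -> prec (refl x) (refl y).
Proof. by rewrite !precE !comp_perp_reflection !comp_h_reflection -opprD normrN. Qed.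

Section UnitPerp.
Variable e1 : E.
Hypothesis e1_unit : `|e1| = 1.
Hypothesis e1_perp : hc e1 = 0.

Let comp_h_e1 t : hc (t *: e1) = 0. Proof. by rewrite comp_hZ e1_perp mulr0. Qed.
Let norm_e1 t : `|t *: e1| = `|t|. Proof. by rewrite normrZ e1_unit mulr1. Qed.

Lemma lsc_of_closed : closed_rel prec -> forall d eps, 0 <= d -> 0 < eps ->
  exists2 r, 0 < r & forall d', 0 <= d' -> `|d' - d| < r -> f d - eps < f d'.
Proof.
move=> /closed_relP closed d eps d0 eps0.
have prec0 a t : prec 0 (a *: h + t *: e1) <-> f `|t| <= a.
  by rewrite precE comp_perp_axis // comp_h_axis // comp_perp0 comp_h0 !subr0 norm_e1.
have [r r0 near] := closed 0 ((f d - eps) *: h + d *: e1) ltac:(rewrite prec0 ger0_norm //; lra).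
exists r => // d' d'0 dd'; rewrite ltNge; apply/negP => fd'.
apply: (near 0 ((f d - eps) *: h + d' *: e1)); first by rewrite subrr normr0.
  by rewrite opprD addrACA subrr add0r -scalerBl norm_e1.
by rewrite prec0 ger0_norm.
Qed.

Section Sponge.
Hypothesis cc : cc_sponge prec.

(* The join of the symmetric pair [{x e1, -x e1}] is fixed by the reflection, hence lies on
   the axis; [T h + v] is an upper bound of the pair. *)
Lemma symmetric_pair_bound x v T : 0 <= x -> hc v = 0 ->
  f `|v - x *: e1| <= T -> f `|v + x *: e1| <= T -> f x + f `|v| <= T.
Proof.
move=> x0 hv fvT fvT'; case: cc => [[_ anti] has_join].
have prec_e1 t y : prec (t *: e1) y <-> f `|pp y - t *: e1| <= hc y.
  by rewrite precE (comp_perp_id (comp_h_e1 t)) comp_h_e1 subr0.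
pose P := [set p | p = x *: e1 \/ p = (- x) *: e1].
have ub y : prec (x *: e1) y -> prec ((- x) *: e1) y -> set_le prec P [set y].
  by move=> ? ? _ _ [->|->] ->.
have P0 : P !=set0 by exists (x *: e1); left.
have Pb : right_bounded prec P.
  exists (f x *: h); apply: ub; rewrite prec_e1 comp_perpZh comp_hZh sub0r normrN norm_e1;
    by rewrite ?normrN ger0_norm.
have [c join_c] := has_join P P0 Pb.
have reflP p : P p -> P (refl p).
  rewrite /axis_reflection; case=> ->; [right|left];
    by rewrite comp_h_e1 mulr0 scale0r sub0r -scaleNr ?opprK.
have /eqP : pp (refl c) = pp c.
  by rewrite (join_fixed anti axis_reflectionK prec_reflection reflP join_c).
rewrite comp_perp_reflection eq_sym -addr_eq0 -mulr2n -scaler_nat scaler_eq0 pnatr_eq0.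
move=> /eqP ppc; case: join_c => c_ub /(_ (T *: h + v)) c_least.
have Tv_ub : set_le prec P [set T *: h + v].
  by apply: ub; rewrite prec_e1 comp_perp_axis // comp_h_axis // ?scaleNr ?opprK.
move: (c_least Tv_ub) => /precE; rewrite ppc subr0 comp_perp_axis // comp_h_axis //.
move: (c_ub (x *: e1) c (or_introl erefl) erefl) => /prec_e1.
by rewrite ppc sub0r normrN norm_e1 ger0_norm //; lra.
Qed.

Lemma square_superadditive_of_cc e2 : `|e2| = 1 -> hc e2 = 0 -> ip e1 e2 = 0 ->
  square_superadditive f.
Proof.
move=> e2_unit e2_perp e12 x y x0 y0.
have norm_pm s : s ^+ 2 = x ^+ 2 -> `|y *: e2 + s *: e1| = Num.sqrt (x ^+ 2 + y ^+ 2).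
  move=> sx; rewrite -normr_id -sqrtr_sqr normD_sqr ipZ ipZr (ipC e2) e12 !mulr0 addr0.
  by rewrite !normrZ e1_unit e2_unit !mulr1 !real_normK ?num_real // sx addrC.
have hv : hc (y *: e2) = 0 by rewrite comp_hZ e2_perp mulr0.
have := symmetric_pair_bound (T := f (Num.sqrt (x ^+ 2 + y ^+ 2))) x0 hv.
by rewrite -scaleNr !norm_pm ?sqrrN // normrZ e2_unit mulr1 ger0_norm //; apply.
Qed.

Lemma sum_or_diff_of_cc x y : 0 <= x -> 0 <= y ->
  f x + f y <= f (x + y) \/ f x + f y <= f `|x - y|.
Proof.
move=> x0 y0; pose M := Num.max (f `|x - y|) (f (x + y)).
have le1 : f `|y *: e1 - x *: e1| <= M by rewrite -scalerBl norm_e1 distrC le_max lexx.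
have le2 : f `|y *: e1 + x *: e1| <= M.
  by rewrite -scalerDl norm_e1 ger0_norm ?addr_ge0 // addrC le_max lexx orbT.
have := symmetric_pair_bound x0 (comp_h_e1 y) le1 le2.
by rewrite norm_e1 ger0_norm // le_max => /orP[]; [right|left].
Qed.

Lemma left_lsc_of_cc : square_superadditive f ->
  forall D a, 0 < D -> a < f D -> exists2 d, 0 <= d < D & a < f d.
Proof.
move=> ssa D a D0 aD; apply: contrapT => no_d.
have f_le d : 0 <= d -> d < D -> f d <= a.
  by move=> d0 dD; rewrite leNgt; apply/negP => ad; apply: no_d; exists d; rewrite ?d0.
case: cc => _ has_join.
pose p := a *: h + D *: e1; pose P := [set q | q = 0 \/ q = p].
have fD0 : 0 <= f D by apply/f_ge0/ltW.
have Pb : right_bounded prec P.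
  exists ((`|a| + f D) *: h) => _ _ [->|->] ->; rewrite precE comp_perpZh comp_hZh.
    by rewrite comp_perp0 comp_h0 !subr0 normr0 (f_at0 f_ge0 f_gt0) addr_ge0.
  rewrite comp_perp_axis // comp_h_axis // sub0r normrN norm_e1 gtr0_norm //.
  by have := ler_norm a; lra.
have [c [c_ub c_least]] := has_join P (ex_intro _ 0 (or_introl erefl)) Pb.
have hc_c : hc c <= a.
  apply/ler_addgt0Pr => e e0.
  have [t [t0 tD ft]] := square_superadditive_small ssa D0 e0.
  pose y := (a + f t) *: h + (D - t) *: e1.
  have y_ub : set_le prec P [set y].
    move=> _ _ [->|->] ->; rewrite precE comp_perp_axis // comp_h_axis //.
      rewrite comp_perp0 comp_h0 !subr0 norm_e1 ger0_norm ?subr_ge0 //.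
      by have := f_le (D - t) ltac:(lra) ltac:(lra); have := f_ge0 (ltW t0); lra.
    rewrite comp_perp_axis // comp_h_axis // -scalerBl norm_e1 addrAC subrr add0r.
    by rewrite normrN gtr0_norm //; lra.
  move: (c_least y y_ub) => /precE; rewrite comp_h_axis //.
  by have := f_ge0 (normr_ge0 (pp y - pp c)); lra.
move: (c_ub p c (or_intror erefl) erefl) => /precE.
rewrite comp_perp_axis // comp_h_axis // => pc.
have /normr0_eq0/eqP : `|pp c - D *: e1| = 0 by apply: (f_le0_eq0 f_gt0) => //; lra.
rewrite subr_eq0 => /eqP ppc.
move: (c_ub 0 c (or_introl erefl) erefl) => /precE.
by rewrite comp_perp0 comp_h0 ppc !subr0 norm_e1 gtr0_norm //; lra.
Qed.

End Sponge.
End UnitPerp.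

Lemma closed_of_left_lsc : (forall a b, 0 <= a -> a <= b -> f a <= f b) ->
  (forall D a, 0 < D -> a < f D -> exists2 d, 0 <= d < D & a < f d) -> closed_rel prec.
Proof.
move=> mono left_lsc; apply/closed_relP => x y /precE.
rewrite -comp_perpB -comp_hB => /negP; rewrite -ltNge; set w := y - x => fw.
have [a [r [wa r0 fa]]] : exists a r, [/\ hc w < a, 0 < r &
    forall d, 0 <= d -> `|pp w| - r <= d -> a < f d].
  have [D0|D0] := eqVneq `|pp w| 0.
    rewrite D0 (f_at0 f_ge0 f_gt0) in fw.
    exists (hc w / 2), 1; split => [||d d0 _]; [lra | exact: ltr01 |].
    by have := f_ge0 d0; lra.
  have D_gt0 : 0 < `|pp w| by rewrite lt_def D0 normr_ge0.
  have [d /andP [d0 dD] fd] := left_lsc `|pp w| ((f `|pp w| + hc w) / 2) D_gt0 ltac:(lra).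
  exists ((f `|pp w| + hc w) / 2), (`|pp w| - d); split; [lra | lra |].
  by move=> d' d'0 dd'; apply: lt_le_trans fd (mono _ _ d0 _); lra.
pose rho := Num.min r (a - hc w) / 2.
have [rho_r rho_a] : 2 * rho <= r /\ 2 * rho <= a - hc w.
  by rewrite /rho mulrC divfK ?pnatr_eq0 //; split; rewrite ge_min lexx ?orbT.
exists rho; first by rewrite divr_gt0 // lt_min r0 subr_gt0.
move=> x' y' x'x y'y /precE; rewrite -comp_perpB -comp_hB; set w' := y' - x'.
have dist : `|w' - w| < 2 * rho.
  have -> : w' - w = (y' - y) - (x' - x).
    by rewrite /w /w' !opprB addrACA [in RHS]addrACA (addrC (- x')).
  by apply: le_lt_trans (ler_normB _ _) _; lra.
have hw' : hc w' < a.
  by have := le_trans (ler_norm _) (norm_comp_h_le (w' - w)); rewrite comp_hB; lra.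
have Dw' : `|pp w| - r <= `|pp w'|.
  have := ler_normD (pp w') (pp w - pp w'); rewrite addrC subrK -comp_perpB.
  by have := norm_comp_perp_le (w - w'); rewrite distrC in dist; lra.
by have := fa _ (normr_ge0 _) Dw'; lra.
Qed.

Definition acute_superadditive := forall a d, hc a = 0 -> hc d = 0 -> 0 <= ip a d ->
  f `|a| + f `|d| <= f `|a + d|.

Lemma acute_of_square_superadditive : square_superadditive f -> acute_superadditive.
Proof.
move=> ssa a d _ _ ad; apply: le_trans (ssa _ _ (normr_ge0 a) (normr_ge0 d)) _.
apply: (square_superadditive_mono f_ge0 ssa (sqrtr_ge0 _)).
by rewrite -[X in _ <= X]normr_id -sqrtr_sqr ler_sqrt ?sqr_ge0 // normD_sqr; lra.
Qed.

Lemma acute_of_superadditive_collinear e1 : superadditive f -> `|e1| = 1 ->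
  (forall x, hc x = 0 -> x = ip x e1 *: e1) -> acute_superadditive.
Proof.
move=> sa e1_unit coll a d /coll -> /coll ->; set s := ip a e1; set t := ip d e1.
rewrite ipZ ipZr ipxx e1_unit expr1n mulr1 -scalerDl !normrZ e1_unit !mulr1 => st.
suff -> : `|s + t| = `|s| + `|t| by apply: sa.
apply/eqP; rewrite -(@eqrXn2 _ 2) ?addr_ge0 // real_normK ?num_real //.
by rewrite !sqrrD !real_normK ?num_real // -normrM ger0_norm.
Qed.


Section Join.
Hypothesis cauchy_seq_cvg : forall u : nat -> E, cauchy_ex (u @ \oo) -> cvg (u @ \oo).
Hypothesis closed_prec : closed_rel prec.
Hypothesis mono : forall a b, 0 <= a -> a <= b -> f a <= f b.
Hypothesis acute : acute_superadditive.
Variable P : set E.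
Hypothesis P0 : P !=set0.
Hypothesis Pb : right_bounded prec P.

Let U := [set y | forall p, P p -> prec p y].
Let m := inf [set hc y | y in U].

Let m_le y : U y -> m <= hc y.
Proof.
move=> Uy; apply: ge_inf; last by exists y.
have [p0 Pp0] := P0; exists (hc p0) => _ [z Uz <-].
by have /precE := Uz _ Pp0; have := f_ge0 (normr_ge0 (pp z - pp p0)); lra.
Qed.

Let near_m e : 0 < e -> exists2 y, U y & hc y < m + e.
Proof.
move=> e0; have [s s_ub] := Pb.
have [|_ [y Uy <-]] := @inf_adherent _ [set hc y | y in U] _ e0; last by exists y.
split; first by exists (hc s), s => // p Pp; exact: s_ub.
by exists m => _ [y Uy <-]; apply: m_le.
Qed.

(* A point of the segment [c1, c2] pushed below height [m] is not an upper bound, and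
   acute superadditivity carries the violation to [c1] or to [c2]. *)
Let descent c1 c2 e1 e2 l : U c1 -> U c2 -> hc c1 <= m + e1 -> hc c2 <= m + e2 ->
  0 <= l <= 1 -> f (l * `|pp (c2 - c1)|) <= e1 \/ f ((1 - l) * `|pp (c2 - c1)|) <= e2.
Proof.
move=> U1 U2 hc1 hc2 /andP [l0 l1]; apply: contrapT => /not_orP [/negP + /negP].
rewrite -!ltNge; set D := `|pp (c2 - c1)| => A1 A2.
pose dl := Num.min (f (l * D) - e1) (f ((1 - l) * D) - e2).
have [dl1 dl2] : dl <= f (l * D) - e1 /\ dl <= f ((1 - l) * D) - e2.
  by split; rewrite ge_min lexx ?orbT.
have dl0 : 0 < dl by rewrite lt_min !subr_gt0 A1 A2.
pose z := c1 + l *: (c2 - c1).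
have : ~ U ((m - dl / 2) *: h + pp z) by move/m_le; rewrite comp_h_axis ?comp_h_perp //; lra.
move=> /existsNP [p /not_implyP [Pp /precE]].
rewrite comp_perp_axis ?comp_h_axis ?comp_h_perp // -comp_perpB => /negP; rewrite -ltNge => fz.
have hd : hc (pp (c2 - c1)) = 0 := comp_h_perp _.
have hZ t : hc (t *: pp (c2 - c1)) = 0 by rewrite comp_hZ hd mulr0.
have [ad|ad] := leP 0 (ip (pp (z - p)) (pp (c2 - c1))).
  have ad' : 0 <= ip (pp (z - p)) ((1 - l) *: pp (c2 - c1)) by rewrite ipZr mulr_ge0 ?subr_ge0.
  have z_c2 : z + (1 - l) *: (c2 - c1) = c2.
    by rewrite /z -addrA -scalerDl [l + _]addrC subrK scale1r [c1 + _]addrC subrK.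
  have := acute (comp_h_perp (z - p)) (hZ _) ad'.
  rewrite normrZ ger0_norm ?subr_ge0 // -comp_perpZ -comp_perpD [z - p + _]addrAC z_c2.
  by have /precE := U2 _ Pp; rewrite -comp_perpB; lra.
have ad' : 0 <= ip (pp (z - p)) ((- l) *: pp (c2 - c1)).
  by rewrite ipZr mulr_le0 ?oppr_le0 // ltW.
have := acute (comp_h_perp (z - p)) (hZ _) ad'.
rewrite normrZ normrN ger0_norm // -comp_perpZ -comp_perpD scaleNr [z - p - _]addrAC /z addrK.
by have /precE := U1 _ Pp; rewrite -comp_perpB; lra.
Qed.

Let close_upper_bounds eps : 0 < eps -> exists2 eta, 0 < eta &
  forall y y', U y -> U y' -> hc y <= m + eta -> hc y' <= m + eta -> `|y' - y| < eps.
Proof.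
move=> eps0; have f_eps : 0 < f (eps / 4) by apply/f_gt0; lra.
pose eta := Num.min (f (eps / 4) / 2) (eps / 4).
have [eta1 eta2] : eta <= f (eps / 4) / 2 /\ eta <= eps / 4.
  by split; rewrite ge_min lexx ?orbT.
exists eta; first by rewrite lt_min !divr_gt0.
move=> y y' Uy Uy' hy hy'.
have half : f (2^-1 * `|pp (y' - y)|) <= eta.
  have l01 : 0 <= (2^-1 : R) <= 1 by apply/andP; split; lra.
  have half_eq : 1 - 2^-1 = 2^-1 :> R by lra.
  by have := descent Uy Uy' hy hy' l01; rewrite half_eq; case.
have pp_small : `|pp (y' - y)| < eps / 2.
  rewrite ltNge; apply/negP => big.
  by have := mono (_ : 0 <= eps / 4) (_ : eps / 4 <= 2^-1 * `|pp (y' - y)|); lra.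
have hc_small : `|hc (y' - y)| <= eta.
  by rewrite comp_hB ler_norml; have := m_le Uy; have := m_le Uy'; lra.
by apply: le_lt_trans (norm_le_comp _) _; lra.
Qed.

Let approx_spec n : {y | U y & hc y < m + n.+1%:R^-1}.
Proof. by apply: cid2; apply: near_m; rewrite invr_gt0. Qed.

Let ys n := s2val (approx_spec n).

Let ys_cvg : ys @ \oo --> lim (ys @ \oo).
Proof.
apply: cauchy_seq_cvg => eps eps0; have [eta eta0 close] := close_upper_bounds eps0.
have [N invN] := exists_natinv_lt eta0.
have hc_ys n : (N <= n)%N -> hc (ys n) <= m + eta.
  move=> Nn; apply/ltW/(lt_le_trans (s2valP' (approx_spec n))); rewrite lerD2l.
  by apply/ltW/(le_lt_trans _ invN); rewrite lef_pV2 ?posrE // ler_nat ltnS.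
exists (ys N), N => // n /= Nn; rewrite -ball_normE /ball_ /= distrC.
by apply: close; rewrite ?hc_ys //; apply: s2valP.
Qed.

Let c := lim (ys @ \oo).

Let c_ub : U c.
Proof.
move=> p Pp; apply: contrapT => npc.
have [r r0 sep] := (closed_relP _).1 closed_prec p c npc.
have [N _ near] := cvgr_dist_lt _ _ ys_cvg _ r0.
apply: (sep p (ys N)); first by rewrite subrr normr0.
  by rewrite distrC; exact: near N (leqnn N).
exact: (s2valP (approx_spec N)).
Qed.

Let hc_c : hc c = m.
Proof.
apply/eqP; rewrite eq_le m_le ?c_ub // andbT; apply/ler_addgt0Pr => e e0.
have e2 : 0 < e / 2 by rewrite divr_gt0.
have [N1 _ near] := cvgr_dist_lt _ _ ys_cvg _ e2.
have [N2 invN] := exists_natinv_lt e2.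
move: (maxn N1 N2) (leq_maxl N1 N2) (leq_maxr N1 N2) => n n1 n2.
have := le_trans (ler_norm _) (norm_comp_h_le (c - ys n)); rewrite comp_hB.
have : `|c - ys n| < e / 2 := near n n1.
have : hc (ys n) < m + e / 2.
  apply: (lt_trans (s2valP' (approx_spec n))); rewrite ltrD2l; apply: le_lt_trans invN.
  by rewrite lef_pV2 ?posrE // ler_nat ltnS.
lra.
Qed.

Lemma exists_join : exists x, is_join prec P x.
Proof.
exists c; split=> [p _ Pp ->|y y_ub]; first exact: c_ub.
have Uy : U y by move=> p Pp; exact: y_ub p y Pp erefl.
apply: contrapT => ncy; have [r r0 sep] := (closed_relP _).1 closed_prec c y ncy.
have m_y := m_le Uy; set D := `|pp (y - c)|.
have [D0|D0] := eqVneq D 0.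
  by apply: ncy; apply/precE; rewrite -comp_perpB -/D D0 (f_at0 f_ge0 f_gt0) hc_c subr_ge0.
have D_gt0 : 0 < D by rewrite lt_def D0 normr_ge0.
pose l := Num.min (1 / 2) (r / (2 * D)).
have [l_half l_r] : l <= 1 / 2 /\ l <= r / (2 * D) by split; rewrite ge_min lexx ?orbT.
have l0 : 0 < l by rewrite lt_min !divr_gt0 ?mulr_gt0.
have hc_c0 : hc c <= m + 0 by rewrite hc_c addr0.
have hc_y : hc y <= m + (hc y - m) by rewrite addrC subrK.
have l01 : 0 <= l <= 1 by apply/andP; split; lra.
have [flD|fyD] := descent c_ub Uy hc_c0 hc_y l01.
- have : 0 < f (l * D) by apply/f_gt0; rewrite ?mulr_ge0 ?mulr_gt0 ?ltW.
  lra.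
- pose V := (hc y - m) *: h + (1 - l) *: pp (y - c).
  have hV : hc ((1 - l) *: pp (y - c)) = 0 by rewrite comp_hZ comp_h_perp mulr0.
  apply: (sep c (c + V)); first by rewrite subrr normr0.
    have yc : y - c = (hc y - m) *: h + pp (y - c).
      by rewrite -hc_c -comp_hB [RHS]addrC comp_perpDh.
    have -> : c + V - y = (- l) *: pp (y - c).
      have -> : c + V - y = V - (y - c) by rewrite opprB [V + _]addrC addrAC.
      rewrite [in LHS]yc /V opprD addrACA subrr add0r.
      by rewrite -{2}[pp (y - c)]scale1r -scalerBl; congr (_ *: _); ring.
    rewrite normrZ normrN ger0_norm ?ltW // -/D.
    have : l * D <= r / (2 * D) * D by rewrite ler_pM2r.
    by rewrite (_ : r / (2 * D) * D = r / 2); [lra | field; rewrite gt_eqF].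
  apply/precE; rewrite -comp_perpB -comp_hB [c + V]addrC addrK comp_perp_axis ?comp_h_axis //.
  by rewrite normrZ ger0_norm ?subr_ge0 // -/D; lra.
Qed.

End Join.

Lemma cc_sponge_of_acute :
  (forall u : nat -> E, cauchy_ex (u @ \oo) -> cvg (u @ \oo)) -> closed_rel prec ->
  (forall a b, 0 <= a -> a <= b -> f a <= f b) -> acute_superadditive -> cc_sponge prec.
Proof.
move=> complete closed mono acute; split=> [|P P0 Pb]; first exact: prec_orientation.
exact: exists_join.
Qed.
End Cone.
End InnerProductSpace.

Theorem mainTheorem1 (R : realType) (E : completeNormedModType R)
  (ip : E -> E -> R) (h : E) (f : R -> R) :
  is_inner_product ip ->
  dim_ge E 2 ->
  `|h| = 1 ->
  (forall d, 0 <= d -> 0 <= f d) ->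
  (forall d, 0 <= d -> (0 < f d <-> 0 < d)) ->
  (dim_ge E 3 ->
     (cc_sponge (prec_f ip h f) <->
      closed_rel (prec_f ip h f) /\ square_superadditive f)) /\
  (dim_eq E 2 -> closed_rel (prec_f ip h f) ->
     (cc_sponge (prec_f ip h f) <-> superadditive f)).
Proof.
move=> ipP dim2 h1 f_ge0 f_gt0.
have [e1 e1_on] := exists_orthonormal_extend ipP (orthonormal_unit ipP h1) dim2.
have [_ e1_unit /(_ ord0) e1_h] := orthonormal_extendP ipP e1_on.
have complete (u : nat -> E) : cauchy_ex (u @ \oo) -> cvg (u @ \oo).
  by move=> cu; apply/cauchy_cvgP; apply: cauchy_exP.
split=> [dim3|[_ ndim3] closed].
  have [e2 e2_on] := exists_orthonormal_extend ipP e1_on dim3.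
  have [_ e2_unit e2_perp] := orthonormal_extendP ipP e2_on.
  have e2_h := e2_perp (lift ord_max ord0); rewrite extend_lift in e2_h.
  have e12 := e2_perp ord_max; rewrite extend_max (ipC ipP) in e12.
  split=> [cc|[closed ssa]].
    have ssa := square_superadditive_of_cc ipP h1 e1_unit e1_h cc e2_unit e2_h e12.
    split=> //; apply: (closed_of_left_lsc ipP h1 f_ge0 f_gt0).
      exact: square_superadditive_mono f_ge0 ssa.
    exact: (left_lsc_of_cc ipP h1 f_ge0 f_gt0 e1_unit e1_h cc ssa).
  apply: (cc_sponge_of_acute ipP h1 f_ge0 f_gt0 complete closed).
    exact: square_superadditive_mono f_ge0 ssa.
  exact: (acute_of_square_superadditive ipP f_ge0 ssa).
split=> [cc|sa].
  apply: (superadditive_of_lsc f_ge0 f_gt0).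
    exact: (sum_or_diff_of_cc ipP h1 e1_unit e1_h cc).
  exact: (lsc_of_closed ipP h1 e1_unit e1_h closed).
apply: (cc_sponge_of_acute ipP h1 f_ge0 f_gt0 complete closed).
  exact: superadditive_mono f_ge0 sa.
exact: (acute_of_superadditive_collinear ipP sa e1_unit (collinear_of_dim_lt3 ipP e1_on ndim3)).
Qed.
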